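(* Let $D$ be a (smooth, generic) diagram of a knot in $\mathbb{R}^2$. For every double point of $D$ there exists an intersection parallelogram.
   Context: An intersection parallelogram for a knot diagram $D$ is a parallelogram $P$ with two horizontal sides such that: $P$ contains exactly one double point of $D$ and exactly two arcs of $D$ in its interior; one arc (the vertical arc) meets each of the two horizontal sides exactly once; the other arc (the horizontal arc) meets each of the other two parallel sides exactly once; and the arcs do not pass through the corners of $P$. *)

From Stdlib Require Import Reals Lra List.
From Coquelicot Require Import Coquelicot.
Open Scope R_scope.

Definition pt := (R * R)%type.

Definition curve_pt (gx gy : R -> R) (t : R) : pt := (gx t, gy t).

Definition smooth (f : R -> R) : Prop := forall (n : nat) (x : R), ex_derive_n f n x.

(** p is a double point of the closed curve (period 1): it has two distinct
    parameters in one period [0,1). *)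
Definition is_double_point (gx gy : R -> R) (p : pt) : Prop :=
  exists s t, 0 <= s /\ s < t /\ t < 1 /\ curve_pt gx gy s = p /\ curve_pt gx gy t = p.

(** A smooth generic knot diagram: a smooth, 1-periodic, regular closed plane
    curve, whose only singularities are finitely many transverse double points
    (no triple points, no tangencies). *)
Definition generic_knot_diagram (gx gy : R -> R) : Prop :=
  (forall t, gx (t + 1) = gx t /\ gy (t + 1) = gy t) /\
  smooth gx /\ smooth gy /\
  (forall t, (Derive gx t, Derive gy t) <> (0, 0)) /\
  (forall r s t, 0 <= r -> r < s -> s < t -> t < 1 ->
     ~ (curve_pt gx gy r = curve_pt gx gy s /\ curve_pt gx gy s = curve_pt gx gy t)) /\
  (forall s t, 0 <= s -> s < t -> t < 1 -> curve_pt gx gy s = curve_pt gx gy t ->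
     Derive gx s * Derive gy t - Derive gy s * Derive gx t <> 0) /\
  (exists l : list pt, forall p, is_double_point gx gy p -> In p l).

(** The parallelogram with two horizontal sides
      P = { (x,y) | y0 <= y <= y1, a0 <= x - c*y <= a1 }   (y0 < y1, a0 < a1). *)
Definition in_par (y0 y1 a0 a1 c : R) (p : pt) : Prop :=
  y0 <= snd p <= y1 /\ a0 <= fst p - c * snd p <= a1.
Definition in_par_interior (y0 y1 a0 a1 c : R) (p : pt) : Prop :=
  y0 < snd p < y1 /\ a0 < fst p - c * snd p < a1.
Definition on_bottom (y0 y1 a0 a1 c : R) (p : pt) : Prop :=
  snd p = y0 /\ a0 <= fst p - c * snd p <= a1.
Definition on_top (y0 y1 a0 a1 c : R) (p : pt) : Prop :=
  snd p = y1 /\ a0 <= fst p - c * snd p <= a1.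
Definition on_left (y0 y1 a0 a1 c : R) (p : pt) : Prop :=
  y0 <= snd p <= y1 /\ fst p - c * snd p = a0.
Definition on_right (y0 y1 a0 a1 c : R) (p : pt) : Prop :=
  y0 <= snd p <= y1 /\ fst p - c * snd p = a1.
Definition is_corner (y0 y1 a0 a1 c : R) (p : pt) : Prop :=
  (snd p = y0 \/ snd p = y1) /\ (fst p - c * snd p = a0 \/ fst p - c * snd p = a1).

(** P (given by y0 y1 a0 a1 c) is an intersection parallelogram for the
    diagram, and the unique double point of the diagram in P is p.
    The intersection of the diagram with P consists of exactly two arcs,
    the images of the parameter intervals [s0,s1] (vertical arc) and
    [t0,t1] (horizontal arc), taken modulo the period 1; each arc lies in
    the interior of P apart from its endpoints. *)
Definition intersection_parallelogram (gx gy : R -> R) (p : pt)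
    (y0 y1 a0 a1 c : R) : Prop :=
  y0 < y1 /\ a0 < a1 /\
  is_double_point gx gy p /\ in_par y0 y1 a0 a1 c p /\
  (forall q, is_double_point gx gy q -> in_par y0 y1 a0 a1 c q -> q = p) /\
  exists s0 s1 t0 t1 : R,
    s0 <= s1 /\ s1 < t0 /\ t0 <= t1 /\ t1 < s0 + 1 /\
    (forall t, in_par y0 y1 a0 a1 c (curve_pt gx gy t) <->
       exists k : Z, (s0 <= t + IZR k <= s1) \/ (t0 <= t + IZR k <= t1)) /\
    (forall s, s0 < s < s1 -> in_par_interior y0 y1 a0 a1 c (curve_pt gx gy s)) /\
    (forall t, t0 < t < t1 -> in_par_interior y0 y1 a0 a1 c (curve_pt gx gy t)) /\
    (exists! s, s0 <= s <= s1 /\ on_bottom y0 y1 a0 a1 c (curve_pt gx gy s)) /\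
    (exists! s, s0 <= s <= s1 /\ on_top y0 y1 a0 a1 c (curve_pt gx gy s)) /\
    (exists! t, t0 <= t <= t1 /\ on_left y0 y1 a0 a1 c (curve_pt gx gy t)) /\
    (exists! t, t0 <= t <= t1 /\ on_right y0 y1 a0 a1 c (curve_pt gx gy t)) /\
    (forall t, ~ is_corner y0 y1 a0 a1 c (curve_pt gx gy t)).

From Stdlib Require Import Reals Lra Lia ZArith.
From Coquelicot Require Import Coquelicot.
Open Scope R_scope.

(* Write the double point as p = γ(al) = γ(be) with al < be < al + 1, where the
   branch through al is not horizontal.  The shear (x, y) ↦ (x - c y, y) making
   the tangent at al vertical keeps the tangent at be non-vertical, by
   transversality.  So near al the curve is the graph of an eps-Lipschitz
   function of y, and near be the graph of an L-Lipschitz function of x - c y,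
   where eps may be chosen after L.  In a sheared box of half-height h and
   half-width w with eps h < w and L w < h, the first branch then crosses the two
   horizontal sides and the second branch the two slanted ones, each exactly once,
   and the branches meet only at p.  Since the rest of the curve stays at a
   positive distance from p by compactness, a small h keeps it out of the box. *)

Lemma continuity_pt_ex_derive (f : R -> R) x : ex_derive f x -> continuity_pt f x.
Proof.
  intro Hf. apply continuity_pt_filterlim.
  exact (@ex_derive_continuous R_AbsRing R_NormedModule f x Hf).
Qed.

Lemma slope_le_of_derive (f df : R -> R) k x y : x <= y ->
  (forall t, x <= t <= y -> is_derive f t (df t) /\ k <= df t) ->
  k * (y - x) <= f y - f x.
Proof.
  intros Hxy Hf.
  destruct (MVT_gen f x y df) as [c [Hc ->]]; rewrite ?Rmin_left, ?Rmax_right in * by lra.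
  - intros t Ht. apply Hf. lra.
  - intros t Ht. apply continuity_pt_ex_derive. exists (df t). apply Hf. lra.
  - apply Rmult_le_compat_r; [lra | apply Hf; lra].
Qed.

(* Compare [f] with [K g] through the derivatives of [K g - f] and [K g + f]. *)
Lemma Rabs_diff_le_of_derive (f g df dg : R -> R) K x y : x <= y ->
  (forall t, x <= t <= y ->
     is_derive f t (df t) /\ is_derive g t (dg t) /\ Rabs (df t) <= K * dg t) ->
  Rabs (f y - f x) <= K * (g y - g x).
Proof.
  intros Hxy H.
  assert (Hle : forall e, e = 1 \/ e = -1 ->
            0 * (y - x) <= (K * g y - e * f y) - (K * g x - e * f x)).
  { intros e He.
    apply (slope_le_of_derive (fun t => K * g t - e * f t) (fun t => K * dg t - e * df t));
      [lra|].
    intros t Ht. destruct (H t Ht) as (Hf & Hg & Hb). split.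
    - apply (@is_derive_minus R_AbsRing R_NormedModule); apply is_derive_scal; assumption.
    - apply Rabs_le_between in Hb. destruct He as [-> | ->]; lra. }
  assert (H1 := Hle 1 (or_introl eq_refl)). assert (H2 := Hle (-1) (or_intror eq_refl)).
  apply Rabs_le_between. lra.
Qed.

Lemma Rabs_diff_le_of_derive_around (f g df dg : R -> R) K a d : 0 <= K ->
  (forall t, a - d <= t <= a + d ->
     is_derive f t (df t) /\ is_derive g t (dg t) /\ Rabs (df t) <= K * dg t) ->
  forall t, a - d <= t <= a + d -> Rabs (f t - f a) <= K * Rabs (g t - g a).
Proof.
  intros HK H t Ht. destruct (Rle_dec a t) as [Hat | Hat].
  - eapply Rle_trans; [apply (Rabs_diff_le_of_derive f g df dg); [lra|] |].
    + intros u Hu. apply H. lra.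
    + apply Rmult_le_compat_l; [lra | apply Rle_abs].
  - rewrite Rabs_minus_sym, (Rabs_minus_sym (g t)).
    eapply Rle_trans; [apply (Rabs_diff_le_of_derive f g df dg); [lra|] |].
    + intros u Hu. apply H. lra.
    + apply Rmult_le_compat_l; [lra | apply Rle_abs].
Qed.

Lemma sign_exists x : x <> 0 -> exists s, (s = 1 \/ s = -1) /\ s * x = Rabs x.
Proof.
  intro Hx. destruct (Rcase_abs x) as [Hn | Hp].
  - exists (-1). rewrite Rabs_left by lra. split; [right | ring]; reflexivity.
  - exists 1. rewrite Rabs_right by lra. split; [left | ring]; reflexivity.
Qed.

Lemma Rabs_sign_diff s x y : s = 1 \/ s = -1 -> Rabs (s * x - s * y) = Rabs (x - y).
Proof.
  intros Hs. rewrite <- Rmult_minus_distr_l, Rabs_mult.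
  destruct Hs as [-> | ->]; rewrite ?Rabs_R1, ?Rabs_m1; ring.
Qed.

Lemma IZR_not_in_01 (k : Z) : ~ (0 < IZR k < 1).
Proof. intros [H1 H2]. apply lt_IZR in H1. apply lt_IZR in H2. lia. Qed.

Lemma Rabs_cone_inter x y eps L : 0 <= eps -> eps * L < 1 ->
  Rabs x <= eps * Rabs y -> Rabs y <= L * Rabs x -> x = 0 /\ y = 0.
Proof.
  intros He HeL Hx Hy.
  assert (eps * Rabs y <= eps * (L * Rabs x)) by (apply Rmult_le_compat_l; assumption).
  assert (Rabs x = 0) by (assert (0 <= Rabs x) by apply Rabs_pos; nra).
  assert (Rabs y = 0) by (assert (0 <= Rabs y) by apply Rabs_pos; nra).
  split; apply Rabs_eq_0; assumption.
Qed.

Lemma exists_pos_le3 a b c : 0 < a -> 0 < b -> 0 < c ->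
  exists e, 0 < e /\ e <= a /\ e <= b /\ e <= c.
Proof.
  intros. exists (Rmin a (Rmin b c)).
  assert (Rmin b c <= b) by apply Rmin_l. assert (Rmin b c <= c) by apply Rmin_r.
  repeat split; [repeat apply Rmin_glb_lt; assumption | apply Rmin_l | | ];
    eapply Rle_trans; try apply Rmin_r; assumption.
Qed.

Lemma local_ratio_bound (u v : R -> R) a K :
  continuity_pt u a -> continuity_pt v a ->
  v a <> 0 -> Rabs (u a) < K * Rabs (v a) ->
  exists d s m, 0 < d /\ (s = 1 \/ s = -1) /\ 0 < m /\
    forall t, a - d <= t <= a + d -> m <= s * v t /\ Rabs (u t) <= K * (s * v t).
Proof.
  intros Cu Cv Hva HK.
  destruct (sign_exists _ Hva) as [s [Hs Hsv]].
  set (A := Rabs (v a)) in Hsv. change (Rabs (u a) < K * A) in HK.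
  assert (A_pos : 0 < A) by (apply Rabs_pos_lt; exact Hva).
  assert (K_pos : 0 < K) by (assert (0 <= Rabs (u a)) by apply Rabs_pos; nra).
  set (e := (K * A - Rabs (u a)) / (K + 1)).
  assert (e_pos : 0 < e) by (apply Rdiv_lt_0_compat; lra).
  assert (e_K : (K + 1) * e = K * A - Rabs (u a)) by (unfold e; field; lra).
  assert (m_pos : 0 < A - e).
  { replace (A - e) with ((A + Rabs (u a)) / (K + 1)) by (unfold e; field; lra).
    assert (0 <= Rabs (u a)) by apply Rabs_pos. apply Rdiv_lt_0_compat; lra. }
  destruct (filter_and _ _ (proj1 (continuity_pt_locally _ _) Cu (mkposreal e e_pos))
                           (proj1 (continuity_pt_locally _ _) Cv (mkposreal e e_pos)))
    as [[d d_pos] Hd]; simpl in Hd.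
  exists (d / 2), s, (A - e). split; [lra|]. split; [exact Hs|]. split; [exact m_pos|].
  intros t Ht. destruct (Hd t) as [Hut Hvt].
  { change (Rabs (t - a) < d). apply Rabs_lt_between'. lra. }
  assert (Hsvt : A - e <= s * v t).
  { apply Rabs_lt_between' in Hvt. destruct Hs as [-> | ->]; lra. }
  split; [exact Hsvt|].
  assert (Rabs (u t) - Rabs (u a) <= Rabs (u t - u a)) by apply Rabs_triang_inv.
  nra.
Qed.

Lemma local_graph_bound (P Q : R -> R) a K :
  (forall t, ex_derive P t) -> (forall t, ex_derive Q t) ->
  continuity_pt (Derive P) a -> continuity_pt (Derive Q) a ->
  Derive P a <> 0 -> Rabs (Derive Q a) < K * Rabs (Derive P a) ->
  exists d s m, 0 < d /\ (s = 1 \/ s = -1) /\ 0 < m /\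
    forall t, a - d <= t <= a + d ->
      m <= s * Derive P t /\ Rabs (Q t - Q a) <= K * Rabs (P t - P a).
Proof.
  intros DP DQ CP CQ HPa HK.
  destruct (local_ratio_bound (Derive Q) (Derive P) a K CQ CP HPa HK)
    as (d & s & m & d_pos & Hs & m_pos & Hder).
  assert (K_nonneg : 0 <= K).
  { assert (X := Hder a ltac:(lra)). assert (0 <= Rabs (Derive Q a)) by apply Rabs_pos. nra. }
  exists d, s, m. split; [exact d_pos|]. split; [exact Hs|]. split; [exact m_pos|].
  intros t Ht. split; [apply Hder, Ht|].
  rewrite <- (Rabs_sign_diff s (P t) (P a) Hs).
  apply (Rabs_diff_le_of_derive_around Q (fun u => s * P u) (Derive Q)
           (fun u => s * Derive P u) K a d); [exact K_nonneg | | exact Ht].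
  intros u Hu. split; [|split].
  - apply Derive_correct, DQ.
  - apply is_derive_scal, Derive_correct, DP.
  - apply Hder, Hu.
Qed.

Section Branch.

Variables (P Q dP : R -> R) (a d s m K h r : R).
Hypotheses (m_pos : 0 < m) (h_pos : 0 < h) (h_le : h <= m * d)
  (K_nonneg : 0 <= K) (Kh_lt_r : K * h < r) (s_sign : s = 1 \/ s = -1)
  (P_derive : forall t, is_derive P t (dP t))
  (branch : forall t, a - d <= t <= a + d ->
     m <= s * dP t /\ Rabs (Q t - Q a) <= K * Rabs (P t - P a)).

Lemma branch_slope x y : a - d <= x -> x <= y -> y <= a + d ->
  m * (y - x) <= s * P y - s * P x.
Proof.
  intros Hx Hxy Hy.
  apply (slope_le_of_derive (fun t => s * P t) (fun t => s * dP t)); [exact Hxy|].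
  intros t Ht. split; [apply is_derive_scal, P_derive | apply branch; lra].
Qed.

Lemma branch_inj x y : a - d <= x <= a + d -> a - d <= y <= a + d -> P x = P y -> x = y.
Proof.
  intros Hx Hy Exy.
  destruct (Rtotal_order x y) as [Hlt | [Heq | Hlt]]; [exfalso | exact Heq | exfalso].
  - assert (B := branch_slope x y ltac:(lra) ltac:(lra) ltac:(lra)).
    assert (0 < m * (y - x)) by (apply Rmult_lt_0_compat; lra). rewrite Exy in B. lra.
  - assert (B := branch_slope y x ltac:(lra) ltac:(lra) ltac:(lra)).
    assert (0 < m * (x - y)) by (apply Rmult_lt_0_compat; lra). rewrite Exy in B. lra.
Qed.

Lemma branch_arc : exists s0 s1, a - d <= s0 < a /\ a < s1 <= a + d /\
  (forall t, a - d <= t <= a + d ->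
     (Rabs (P t - P a) <= h /\ Rabs (Q t - Q a) <= r <-> s0 <= t <= s1)) /\
  (forall t, s0 < t < s1 -> Rabs (P t - P a) < h) /\
  (forall t, s0 <= t <= s1 -> Rabs (Q t - Q a) < r) /\
  (exists t, s0 <= t <= s1 /\ P t = P a - h) /\
  (exists t, s0 <= t <= s1 /\ P t = P a + h).
Proof.
  assert (d_pos : 0 < d) by nra.
  set (H := fun t => s * P t).
  assert (H_cont : continuity H).
  { intro t. apply continuity_pt_ex_derive. exists (s * dP t). apply is_derive_scal, P_derive. }
  assert (Hl : m * d <= H a - H (a - d)).
  { replace (m * d) with (m * (a - (a - d))) by ring. apply branch_slope; nra. }
  assert (Hr : m * d <= H (a + d) - H a).
  { replace (m * d) with (m * (a + d - a)) by ring. apply branch_slope; nra. }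
  destruct (IVT_gen H (a - d) a (H a - h) H_cont) as [s0 [Hs0 Es0]];
    [rewrite Rmin_left, Rmax_right by lra; lra|].
  destruct (IVT_gen H a (a + d) (H a + h) H_cont) as [s1 [Hs1 Es1]];
    [rewrite Rmin_left, Rmax_right by lra; lra|].
  rewrite Rmin_left, Rmax_right in Hs0, Hs1 by lra. unfold H in Es0, Es1.
  assert (s0 <> a) by (intro; subst; lra). assert (s1 <> a) by (intro; subst; lra).
  assert (Close : forall t, a - d <= t <= a + d ->
            (s0 <= t <= s1 <-> Rabs (P t - P a) <= h)).
  { intros t Ht. rewrite <- (Rabs_sign_diff s _ _ s_sign), Rabs_le_between'. split.
    - intros Hst. assert (B0 := branch_slope s0 t ltac:(lra) ltac:(lra) ltac:(lra)).
      assert (B1 := branch_slope t s1 ltac:(lra) ltac:(lra) ltac:(lra)). nra.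
    - intros Hb. split; apply Rnot_lt_le; intro Hlt.
      + assert (B0 := branch_slope t s0 ltac:(lra) ltac:(lra) ltac:(lra)). nra.
      + assert (B1 := branch_slope s1 t ltac:(lra) ltac:(lra) ltac:(lra)). nra. }
  assert (Flat : forall t, s0 <= t <= s1 -> Rabs (Q t - Q a) < r).
  { intros t Ht. assert (Rabs (P t - P a) <= h) by (apply Close; lra).
    assert (K * Rabs (P t - P a) <= K * h) by (apply Rmult_le_compat_l; lra).
    apply Rle_lt_trans with (K * Rabs (P t - P a)); [apply branch|]; lra. }
  exists s0, s1. split; [lra|]. split; [lra|]. split; [|split; [|split; [exact Flat|]]].
  - intros t Ht. rewrite <- Close by exact Ht. split; [tauto|].
    intro Hst. split; [exact Hst | apply Rlt_le, Flat, Hst].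
  - intros t Ht. rewrite <- (Rabs_sign_diff s _ _ s_sign). apply Rabs_lt_between'.
    assert (B0 := branch_slope s0 t ltac:(lra) ltac:(lra) ltac:(lra)).
    assert (B1 := branch_slope t s1 ltac:(lra) ltac:(lra) ltac:(lra)). nra.
  - destruct s_sign as [-> | ->]; split; [exists s0 | exists s1 | exists s1 | exists s0];
      split; lra.
Qed.

End Branch.

Lemma periodic_IZR (f : R -> R) : (forall t, f (t + 1) = f t) ->
  forall (k : Z) t, f (t + IZR k) = f t.
Proof.
  intros Hf k. induction k as [| k IH | k IH] using Z.peano_ind; intro t.
  - now rewrite Rplus_0_r.
  - rewrite succ_IZR, <- Rplus_assoc, Hf. apply IH.
  - unfold Z.pred. rewrite plus_IZR.
    replace (t + (IZR k + IZR (-1))) with (t - 1 + IZR k) by (simpl; ring).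
    rewrite IH, <- (Hf (t - 1)). f_equal. ring.
Qed.

Lemma Derive_periodic (f : R -> R) t : (forall t, f (t + 1) = f t) ->
  Derive f (t + 1) = Derive f t.
Proof.
  intro Hf. unfold Derive. f_equal. apply Lim_ext. intro u.
  now rewrite Rplus_assoc, (Rplus_comm 1), <- Rplus_assoc, !Hf.
Qed.

Lemma shift_into_period (a t : R) : exists k : Z, a <= t + IZR k < a + 1.
Proof.
  destruct (base_Int_part (t - a)) as [H1 H2].
  exists (- Int_part (t - a))%Z. rewrite opp_IZR. lra.
Qed.

Lemma curve_pt_periodic (gx gy : R -> R) :
  (forall t, gx (t + 1) = gx t) -> (forall t, gy (t + 1) = gy t) ->
  forall (k : Z) t, curve_pt gx gy (t + IZR k) = curve_pt gx gy t.
Proof. intros Hx Hy k t. unfold curve_pt. now rewrite (periodic_IZR _ Hx), (periodic_IZR _ Hy). Qed.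

Section DoublePoint.

Variables (gx gy : R -> R) (p : pt) (al be : R).
Hypotheses
  (gx_per : forall t, gx (t + 1) = gx t) (gy_per : forall t, gy (t + 1) = gy t)
  (gx_derive : forall t, ex_derive gx t) (gy_derive : forall t, ex_derive gy t)
  (Dgx_cont : forall t, continuity_pt (Derive gx) t)
  (Dgy_cont : forall t, continuity_pt (Derive gy) t)
  (al_be : al < be < al + 1)
  (dp : is_double_point gx gy p)
  (curve_al : curve_pt gx gy al = p) (curve_be : curve_pt gx gy be = p)
  (preimages : forall t, al <= t < al + 1 -> curve_pt gx gy t = p -> t = al \/ t = be)
  (Dgy_al : Derive gy al <> 0)
  (transverse : Derive gx al * Derive gy be - Derive gy al * Derive gx be <> 0).

(* The shear [x - c y] makes the branch through [al] vertical at [p]. *)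
Let c := Derive gx al / Derive gy al.
Let F t := gx t - c * gy t.
Let px := F al.
Let py := gy al.

Lemma shear_is_derive t : is_derive F t (Derive gx t - c * Derive gy t).
Proof.
  apply (@is_derive_minus R_AbsRing R_NormedModule gx (fun u => c * gy u)).
  - apply Derive_correct, gx_derive.
  - apply is_derive_scal, Derive_correct, gy_derive.
Qed.

Lemma shear_ex_derive t : ex_derive F t.
Proof. eexists. apply shear_is_derive. Qed.

Lemma Derive_shear t : Derive F t = Derive gx t - c * Derive gy t.
Proof. apply is_derive_unique, shear_is_derive. Qed.

Lemma Derive_shear_cont t : continuity_pt (Derive F) t.
Proof.
  apply (continuity_pt_ext (fun u => Derive gx u - c * Derive gy u)).
  - intro u. symmetry. apply Derive_shear.
  - apply continuity_pt_minus; [|apply continuity_pt_scal]; auto.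
Qed.

Lemma Derive_shear_al : Derive F al = 0.
Proof. rewrite Derive_shear. unfold c. field. exact Dgy_al. Qed.

Lemma Derive_shear_be : Derive F be <> 0.
Proof.
  rewrite Derive_shear. unfold c. intro E. apply transverse.
  apply (Rmult_eq_compat_l (Derive gy al)) in E.
  field_simplify in E; [lra | exact Dgy_al].
Qed.

Lemma curve_pt_eq_iff u v :
  curve_pt gx gy u = curve_pt gx gy v <-> gy u = gy v /\ F u = F v.
Proof.
  unfold curve_pt, F. split.
  - intro E. injection E as E1 E2. now rewrite E1, E2.
  - intros [E1 E2]. rewrite E1 in E2. f_equal; [lra | exact E1].
Qed.

Lemma curve_pt_eq_p t : curve_pt gx gy t = p <-> gy t = py /\ F t = px.
Proof. rewrite <- curve_al. apply curve_pt_eq_iff. Qed.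

Lemma shear_coords_be : gy be = py /\ F be = px.
Proof. apply curve_pt_eq_p, curve_be. Qed.

Lemma shear_periodic (k : Z) t : F (t + IZR k) = F t.
Proof. unfold F. now rewrite (periodic_IZR _ gx_per), (periodic_IZR _ gy_per). Qed.

Lemma away_from_double_point d : 0 < d -> al + d <= be - d -> be + d <= al + 1 - d ->
  exists m, 0 < m /\ forall t, al + d <= t <= be - d \/ be + d <= t <= al + 1 - d ->
    m <= Rabs (gy t - py) + Rabs (F t - px).
Proof.
  intros d_pos Hab Hba.
  set (D := fun t => Rabs (gy t - py) + Rabs (F t - px)).
  assert (D_cont : forall t, continuity_pt D t).
  { intro t. unfold D. apply continuity_pt_plus.
    - apply (continuity_pt_comp (fun u => gy u - py) Rabs); [|apply Rcontinuity_abs].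
      apply continuity_pt_minus; [apply continuity_pt_ex_derive, gy_derive|].
      apply continuity_pt_const. intros ? ?. reflexivity.
    - apply (continuity_pt_comp (fun u => F u - px) Rabs); [|apply Rcontinuity_abs].
      apply continuity_pt_minus; [apply continuity_pt_ex_derive, shear_ex_derive|].
      apply continuity_pt_const. intros ? ?. reflexivity. }
  assert (D_pos : forall t, al < t < al + 1 -> t <> be -> 0 < D t).
  { intros t Ht Htb. unfold D.
    assert (0 <= Rabs (gy t - py)) by apply Rabs_pos.
    assert (0 <= Rabs (F t - px)) by apply Rabs_pos.
    destruct (Req_dec (gy t) py) as [Ey | Ey]; [destruct (Req_dec (F t) px) as [EF | EF]|].
    - destruct (preimages t ltac:(lra) (proj2 (curve_pt_eq_p t) (conj Ey EF))); lra.
    - assert (0 < Rabs (F t - px)) by (apply Rabs_pos_lt; lra). lra.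
    - assert (0 < Rabs (gy t - py)) by (apply Rabs_pos_lt; lra). lra. }
  destruct (continuity_ab_min D (al + d) (be - d) Hab (fun t _ => D_cont t)) as [t1 [Ht1m Ht1]].
  destruct (continuity_ab_min D (be + d) (al + 1 - d) Hba (fun t _ => D_cont t)) as [t2 [Ht2m Ht2]].
  exists (Rmin (D t1) (D t2)). split.
  - apply Rmin_glb_lt; apply D_pos; lra.
  - intros t [Ht | Ht].
    + eapply Rle_trans; [apply Rmin_l | apply Ht1m, Ht].
    + eapply Rle_trans; [apply Rmin_r | apply Ht2m, Ht].
Qed.


Section Box.

Variables (d h w s0 s1 t0 t1 : R).

Let in_box t := Rabs (gy t - py) <= h /\ Rabs (F t - px) <= w.

Let near_al t := al - d <= t <= al + d.
Let near_be t := be - d <= t <= be + d.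

Hypotheses
  (h_pos : 0 < h) (w_pos : 0 < w)
  (nbhds_disjoint : al + d < be - d /\ be + d < al + 1 - d)
  (arc_al_range : al - d <= s0 <= s1 /\ s1 <= al + d)
  (arc_be_range : be - d <= t0 <= t1 /\ t1 <= be + d)
  (box_near_al : forall t, near_al t -> (in_box t <-> s0 <= t <= s1))
  (box_near_be : forall t, near_be t -> (in_box t <-> t0 <= t <= t1))
  (box_elsewhere : forall t, al + d <= t <= be - d \/ be + d <= t <= al + 1 - d -> ~ in_box t)
  (gy_inj : forall u v, near_al u -> near_al v -> gy u = gy v -> u = v)
  (shear_inj : forall u v, near_be u -> near_be v -> F u = F v -> u = v)
  (branches_meet_at_p : forall u v, near_al u -> near_be v ->
     curve_pt gx gy u = curve_pt gx gy v -> curve_pt gx gy u = p)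
  (arc_al_inside : forall t, s0 < t < s1 -> Rabs (gy t - py) < h)
  (arc_al_narrow : forall t, s0 <= t <= s1 -> Rabs (F t - px) < w)
  (arc_be_inside : forall t, t0 < t < t1 -> Rabs (F t - px) < w)
  (arc_be_narrow : forall t, t0 <= t <= t1 -> Rabs (gy t - py) < h)
  (arc_al_bottom : exists t, s0 <= t <= s1 /\ gy t = py - h)
  (arc_al_top : exists t, s0 <= t <= s1 /\ gy t = py + h)
  (arc_be_left : exists t, t0 <= t <= t1 /\ F t = px - w)
  (arc_be_right : exists t, t0 <= t <= t1 /\ F t = px + w).

Lemma in_par_curve_pt t :
  in_par (py - h) (py + h) (px - w) (px + w) c (curve_pt gx gy t) <-> in_box t.
Proof. unfold in_par, in_box, F; simpl. rewrite !Rabs_le_between'. tauto. Qed.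

Lemma in_par_interior_curve_pt t :
  in_par_interior (py - h) (py + h) (px - w) (px + w) c (curve_pt gx gy t) <->
  Rabs (gy t - py) < h /\ Rabs (F t - px) < w.
Proof. unfold in_par_interior, F; simpl. rewrite !Rabs_lt_between'. tauto. Qed.

Lemma in_box_periodic (k : Z) t : in_box (t + IZR k) <-> in_box t.
Proof.
  unfold in_box. now rewrite shear_periodic, (periodic_IZR _ gy_per).
Qed.

Lemma in_box_iff_arcs t :
  in_box t <-> exists k : Z, s0 <= t + IZR k <= s1 \/ t0 <= t + IZR k <= t1.
Proof.
  split.
  - intro Hin. destruct (shift_into_period al t) as [k Hk].
    rewrite <- (in_box_periodic k) in Hin.
    destruct (Rle_dec (t + IZR k) (al + d)) as [H1 | H1];
      [exists k; left; apply box_near_al; unfold near_al; [lra | exact Hin]|].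
    destruct (Rle_dec (t + IZR k) (be - d)) as [H2 | H2];
      [exfalso; apply (box_elsewhere (t + IZR k)); [lra | exact Hin]|].
    destruct (Rle_dec (t + IZR k) (be + d)) as [H3 | H3];
      [exists k; right; apply box_near_be; unfold near_be; [lra | exact Hin]|].
    destruct (Rle_dec (t + IZR k) (al + 1 - d)) as [H4 | H4];
      [exfalso; apply (box_elsewhere (t + IZR k)); [lra | exact Hin]|].
    exists (k - 1)%Z. left. rewrite minus_IZR.
    replace (t + (IZR k - 1)) with (t + IZR k + IZR (-1)) by (simpl; ring).
    rewrite <- (in_box_periodic (-1)) in Hin.
    apply box_near_al; unfold near_al; [simpl in *; lra | exact Hin].
  - intros [k [Hk | Hk]]; apply (in_box_periodic k).
    + apply box_near_al; unfold near_al; [lra | exact Hk].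
    + apply box_near_be; unfold near_be; [lra | exact Hk].
Qed.

Lemma double_point_in_box q : is_double_point gx gy q ->
  in_par (py - h) (py + h) (px - w) (px + w) c q -> q = p.
Proof.
  intros (u & v & Hu & Huv & Hv & <- & Cv) Hq.
  assert (Hq' := Hq). rewrite <- Cv in Hq'.
  apply in_par_curve_pt, in_box_iff_arcs in Hq as [k [Hk | Hk]];
  apply in_par_curve_pt, in_box_iff_arcs in Hq' as [l [Hl | Hl]];
  rewrite <- (curve_pt_periodic _ _ gx_per gy_per k u) in Cv |- *;
  rewrite <- (curve_pt_periodic _ _ gx_per gy_per l v) in Cv.
  - exfalso. apply (IZR_not_in_01 (k - l)). rewrite minus_IZR.
    assert (u + IZR k = v + IZR l); [|lra].
    apply gy_inj; unfold near_al; try lra. apply (proj1 (curve_pt_eq_iff _ _) (eq_sym Cv)).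
  - apply (branches_meet_at_p _ (v + IZR l)); unfold near_al, near_be;
      [lra | lra | now symmetry].
  - rewrite <- Cv. apply (branches_meet_at_p _ (u + IZR k)); unfold near_al, near_be;
      [lra | lra | exact Cv].
  - exfalso. apply (IZR_not_in_01 (k - l)). rewrite minus_IZR.
    assert (u + IZR k = v + IZR l); [|lra].
    apply shear_inj; unfold near_be; try lra. apply (proj1 (curve_pt_eq_iff _ _) (eq_sym Cv)).
Qed.

Lemma box_no_corner t :
  ~ is_corner (py - h) (py + h) (px - w) (px + w) c (curve_pt gx gy t).
Proof.
  unfold is_corner; simpl. change (gx t - c * gy t) with (F t). intros [Hy HF].
  assert (Hin : in_box t).
  { split; apply Rabs_le_between'; destruct Hy, HF; lra. }
  apply in_box_iff_arcs in Hin as [k [Hk | Hk]].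
  - assert (X := arc_al_narrow _ Hk). rewrite shear_periodic in X.
    apply Rabs_lt_between' in X. destruct HF; lra.
  - assert (X := arc_be_narrow _ Hk). rewrite (periodic_IZR _ gy_per) in X.
    apply Rabs_lt_between' in X. destruct Hy; lra.
Qed.

Lemma arc_al_unique_level y : (exists t, s0 <= t <= s1 /\ gy t = y) ->
  exists! t, s0 <= t <= s1 /\ gy t = y /\ px - w <= F t <= px + w.
Proof.
  intros [t [Ht Et]]. exists t. split.
  - split; [exact Ht | split; [exact Et |]]. apply Rabs_le_between', Rlt_le, arc_al_narrow, Ht.
  - intros t' (Ht' & Et' & _). apply gy_inj; unfold near_al; lra.
Qed.

Lemma arc_be_unique_level x : (exists t, t0 <= t <= t1 /\ F t = x) ->
  exists! t, t0 <= t <= t1 /\ py - h <= gy t <= py + h /\ F t = x.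
Proof.
  intros [t [Ht Et]]. exists t. split.
  - split; [exact Ht | split; [| exact Et]]. apply Rabs_le_between', Rlt_le, arc_be_narrow, Ht.
  - intros t' (Ht' & _ & Et'). apply shear_inj; unfold near_be; lra.
Qed.

Lemma box_intersection_parallelogram :
  intersection_parallelogram gx gy p (py - h) (py + h) (px - w) (px + w) c.
Proof.
  assert (in_par_p : in_par (py - h) (py + h) (px - w) (px + w) c p).
  { rewrite <- curve_al. apply in_par_curve_pt. unfold in_box, px, py.
    rewrite !Rminus_diag, Rabs_R0. lra. }
  split; [lra|]. split; [lra|]. split; [exact dp|]. split; [exact in_par_p|].
  split; [exact double_point_in_box|].
  exists s0, s1, t0, t1.
  split; [lra|]. split; [lra|]. split; [lra|]. split; [lra|].
  split; [intro t; rewrite in_par_curve_pt; apply in_box_iff_arcs|].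
  split.
  { intros t Ht. apply in_par_interior_curve_pt.
    split; [apply arc_al_inside | apply arc_al_narrow]; lra. }
  split.
  { intros t Ht. apply in_par_interior_curve_pt.
    split; [apply arc_be_narrow | apply arc_be_inside]; lra. }
  split; [exact (arc_al_unique_level _ arc_al_bottom)|].
  split; [exact (arc_al_unique_level _ arc_al_top)|].
  split; [exact (arc_be_unique_level _ arc_be_left)|].
  split; [exact (arc_be_unique_level _ arc_be_right)|].
  exact box_no_corner.
Qed.

End Box.

Section Sizes.

Variables (d eps L sA mA sB mB h : R).
Hypotheses
  (gaps : 3 * d <= be - al /\ 3 * d <= al + 1 - be)
  (eps_pos : 0 < eps) (L_pos : 0 < L) (eps_small : eps * (L + 1) < 1)
  (mA_pos : 0 < mA) (mB_pos : 0 < mB)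
  (near_al : forall t, al - d <= t <= al + d ->
     mA <= sA * Derive gy t /\ Rabs (F t - px) <= eps * Rabs (gy t - py))
  (near_be : forall t, be - d <= t <= be + d ->
     mB <= sB * Derive F t /\ Rabs (gy t - py) <= L * Rabs (F t - px))
  (sA_sign : sA = 1 \/ sA = -1) (sB_sign : sB = 1 \/ sB = -1)
  (h_pos : 0 < h) (h_mA : h <= mA * d) (h_mB : h <= mB * d * (L + 1))
  (h_far : forall t, al + d <= t <= be - d \/ be + d <= t <= al + 1 - d ->
     2 * h <= Rabs (gy t - py) + Rabs (F t - px)).

Let w := h / (L + 1).

Lemma sized_box_intersection_parallelogram :
  intersection_parallelogram gx gy p (py - h) (py + h) (px - w) (px + w) c.
Proof.
  destruct shear_coords_be as [gy_be F_be].
  assert (w_pos : 0 < w) by (apply Rdiv_lt_0_compat; lra).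
  assert (w_h : w * (L + 1) = h) by (unfold w; field; lra).
  assert (near_be' : forall t, be - d <= t <= be + d ->
            mB <= sB * Derive F t /\ Rabs (gy t - gy be) <= L * Rabs (F t - F be))
    by (rewrite gy_be, F_be; exact near_be).
  destruct (branch_arc gy F (Derive gy) al d sA mA eps h w) as
    (s0 & s1 & s0_range & s1_range & box_al & inside_al & narrow_al & bottom & top);
    try assumption; try nra.
  { intro t. apply Derive_correct, gy_derive. }
  destruct (branch_arc F gy (Derive F) be d sB mB L w h) as
    (t0 & t1 & t0_range & t1_range & box_be & inside_be & narrow_be & left & right);
    try assumption; try nra.
  { intro t. apply Derive_correct, shear_ex_derive. }
  rewrite F_be, gy_be in *.
  apply (box_intersection_parallelogram d h w s0 s1 t0 t1); try assumption; try lra.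
  - intros t Ht. rewrite <- box_be by exact Ht. tauto.
  - intros t Ht [Hy HF]. assert (X := h_far t Ht). nra.
  - apply (branch_inj gy F (Derive gy) al d sA mA eps); [lra | | exact near_al].
    intro t. apply Derive_correct, gy_derive.
  - apply (branch_inj F gy (Derive F) be d sB mB L); [lra | | rewrite gy_be, F_be; exact near_be].
    intro t. apply Derive_correct, shear_ex_derive.
  - intros u v Hu Hv E. apply curve_pt_eq_p. apply curve_pt_eq_iff in E as [Ey EF].
    destruct (Rabs_cone_inter (F u - px) (gy u - py) eps L) as [E1 E2]; [lra | nra | | |].
    + apply near_al, Hu.
    + rewrite Ey, EF. apply near_be, Hv.
    + split; lra.
Qed.

End Sizes.

Lemma intersection_parallelogram_at_branches :
  exists y0 y1 a0 a1 c', intersection_parallelogram gx gy p y0 y1 a0 a1 c'.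
Proof.
  destruct shear_coords_be as [gy_be F_be].
  assert (FB_pos : 0 < Rabs (Derive F be)) by apply Rabs_pos_lt, Derive_shear_be.
  set (L := Rabs (Derive gy be) / Rabs (Derive F be) + 1).
  assert (L_pos : 0 < L).
  { assert (0 <= Rabs (Derive gy be) / Rabs (Derive F be))
      by (apply Rdiv_le_0_compat; [apply Rabs_pos | lra]).
    unfold L. lra. }
  destruct (local_graph_bound F gy be L shear_ex_derive gy_derive (Derive_shear_cont be)
              (Dgy_cont be) Derive_shear_be)
    as (dB & sB & mB & dB_pos & sB_sign & mB_pos & near_be).
  { unfold L, Rdiv. rewrite Rmult_plus_distr_r, Rmult_1_l, Rmult_assoc, Rinv_l by lra. lra. }
  rewrite gy_be, F_be in near_be.
  set (eps := / (2 * (L + 1))).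
  assert (eps_pos : 0 < eps) by (apply Rinv_0_lt_compat; lra).
  assert (eps_L : eps * (L + 1) = / 2) by (unfold eps; field; lra).
  destruct (local_graph_bound gy F al eps gy_derive shear_ex_derive (Dgy_cont al)
              (Derive_shear_cont al) Dgy_al)
    as (dA & sA & mA & dA_pos & sA_sign & mA_pos & near_al).
  { rewrite Derive_shear_al, Rabs_R0. apply Rmult_lt_0_compat; [lra | apply Rabs_pos_lt, Dgy_al]. }
  set (gap := Rmin (be - al) (al + 1 - be)).
  assert (gap_le : gap <= be - al /\ gap <= al + 1 - be) by (split; [apply Rmin_l | apply Rmin_r]).
  destruct (exists_pos_le3 dA dB (gap / 3)) as (d & d_pos & d_dA & d_dB & d_gap);
    [lra | lra | apply Rdiv_lt_0_compat; [apply Rmin_glb_lt |]; lra |].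
  destruct (away_from_double_point d d_pos ltac:(lra) ltac:(lra)) as [mS [mS_pos far]].
  destruct (exists_pos_le3 (mA * d) (mB * d * (L + 1)) (mS / 2))
    as (h & h_pos & h_mA & h_mB & h_mS);
    [nra | apply Rmult_lt_0_compat; nra | lra |].
  eexists _, _, _, _, _.
  apply (sized_box_intersection_parallelogram d eps L sA mA sB mB h); try assumption; try lra.
  - intros t Ht. apply near_al. lra.
  - intros t Ht. apply near_be. lra.
  - intros t Ht. assert (X := far t Ht). lra.
Qed.

End DoublePoint.

Lemma smooth_C1 (f : R -> R) : smooth f ->
  (forall t, ex_derive f t) /\ (forall t, continuity_pt (Derive f) t).
Proof.
  intro Hf. split; intro t; [exact (Hf 1%nat t) | apply continuity_pt_ex_derive, (Hf 2%nat t)].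
Qed.

Lemma double_point_preimages (gx gy : R -> R) p a b :
  (forall t, gx (t + 1) = gx t /\ gy (t + 1) = gy t) ->
  (forall r s t, 0 <= r -> r < s -> s < t -> t < 1 ->
     ~ (curve_pt gx gy r = curve_pt gx gy s /\ curve_pt gx gy s = curve_pt gx gy t)) ->
  0 <= a -> a < b -> b < 1 -> curve_pt gx gy a = p -> curve_pt gx gy b = p ->
  forall t, 0 <= t < 2 -> curve_pt gx gy t = p -> t = a \/ t = b \/ t = a + 1 \/ t = b + 1.
Proof.
  intros Hper Htriple Ha Hab Hb Ca Cb.
  assert (In_period : forall t, 0 <= t < 1 -> curve_pt gx gy t = p -> t = a \/ t = b).
  { intros t Ht Ct.
    destruct (Rtotal_order t a) as [Hta | [-> | Hta]]; [exfalso | now left |].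
    - apply (Htriple t a b); try lra. split; congruence.
    - destruct (Rtotal_order t b) as [Htb | [-> | Htb]]; [exfalso | now right | exfalso].
      + apply (Htriple a t b); try lra. split; congruence.
      + apply (Htriple a b t); try lra. split; congruence. }
  intros t Ht Ct. destruct (Rlt_dec t 1) as [Ht1 | Ht1].
  - destruct (In_period t) as [-> | ->]; [lra | exact Ct | now left | now right; left].
  - destruct (In_period (t - 1)) as [E | E];
      [lra | | right; right; left; lra | right; right; right; lra].
    rewrite <- Ct, <- (curve_pt_periodic gx gy (fun u => proj1 (Hper u))
                                         (fun u => proj2 (Hper u)) (-1) t).
    reflexivity.
Qed.

Theorem mainTheorem2 (gx gy : R -> R) (hD : generic_knot_diagram gx gy)
  (p : R * R) (hp : is_double_point gx gy p) :
  exists y0 y1 a0 a1 c : R, intersection_parallelogram gx gy p y0 y1 a0 a1 c.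
Proof.
  destruct hD as (Hper & [Dx Cx]%smooth_C1 & [Dy Cy]%smooth_C1 & _ & Htriple & Htrans & _).
  assert (Px : forall t, gx (t + 1) = gx t) by apply Hper.
  assert (Py : forall t, gy (t + 1) = gy t) by apply Hper.
  pose proof hp as (a & b & Ha & Hab & Hb & Ca & Cb).
  assert (Hcross := Htrans a b Ha Hab Hb (eq_trans Ca (eq_sym Cb))).
  assert (Pre := double_point_preimages gx gy p a b Hper Htriple Ha Hab Hb Ca Cb).
  destruct (Req_dec (Derive gy a) 0) as [Dya | Dya].
  (* The branch at [a] is horizontal, so the one at [b] is not; use [b] and [a + 1]. *)
  - apply (intersection_parallelogram_at_branches gx gy p b (a + 1)); auto; try lra.
    + rewrite <- Ca. apply (curve_pt_periodic gx gy Px Py 1).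
    + intros t Ht Ct. destruct (Pre t) as [E | [E | [E | E]]]; auto; lra.
    + intro E. apply Hcross. rewrite Dya, E. ring.
    + rewrite !Derive_periodic by assumption. intro E. apply Hcross. lra.
  - apply (intersection_parallelogram_at_branches gx gy p a b); auto; try lra.
    intros t Ht Ct. destruct (Pre t) as [E | [E | [E | E]]]; auto; lra.
Qed.
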